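(* Let $\mathcal{W}=\mathcal{W}^{(1)}+\cdots+\mathcal{W}^{(K)}$ be a decomposition of a tensor $\mathcal{W}\in\mathbb{R}^{n_1\times\cdots\times n_K}$, and let $\bar r_k=\mathrm{rank}(\boldsymbol{W}^{(k)}_{(k)})$. This decomposition is locally identifiable if and only if there exists $k^\ast$ such that $\mathcal{W}^{(k^\ast)}=\mathcal{W}$ and $\mathcal{W}^{(k)}=0$ for all $k\ne k^\ast$.
   Context: $N=\prod_k n_k$; for a tensor $\mathcal{W}^{(k)}$, $\boldsymbol{W}^{(k)}_{(k)}\in\mathbb{R}^{n_k\times N/n_k}$ is its mode-$k$ unfolding (columns are its mode-$k$ fibers). A decomposition $\mathcal{W}=\sum_{k=1}^K\mathcal{W}^{(k)}$ with $\bar r_k=\mathrm{rank}(\boldsymbol{W}^{(k)}_{(k)})$ is called locally identifiable if there is no other decomposition $\mathcal{W}=\sum_{k=1}^K\tilde{\mathcal{W}}^{(k)}$ (with $(\tilde{\mathcal{W}}^{(k)})_k\ne(\mathcal{W}^{(k)})_k$) having the same ranks, i.e. $\mathrm{rank}(\tilde{\boldsymbol{W}}^{(k)}_{(k)})=\bar r_k$ for all $k$. *)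

From HB Require Import structures.
From mathcomp Require Import all_boot all_order all_algebra.
Set Implicit Arguments. Unset Strict Implicit. Unset Printing Implicit Defensive.
Import Order.TTheory GRing.Theory Num.Theory.
Local Open Scope ring_scope.

(* Multi-indices of a tensor in R^{n_0 x ... x n_{K-1}} (modes indexed by 'I_K). *)
Definition midx (K : nat) (n : 'I_K -> nat) : finType :=
  {dffun forall j : 'I_K, 'I_(n j)}.

Definition tensor (R : realFieldType) (K : nat) (n : 'I_K -> nat) :=
  {ffun midx n -> R}.

(* Indices of all modes other than k: these index the mode-k fibers
   (the columns of the mode-k unfolding); there are N / n_k of them. *)
Definition cidx (K : nat) (n : 'I_K -> nat) (k : 'I_K) : finType :=
  {dffun forall j : {j : 'I_K | j != k}, 'I_(n (val j))}.

Definition join (K : nat) (n : 'I_K -> nat) (k : 'I_K) (i : 'I_(n k))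
    (c : cidx n k) : midx n :=
  [ffun j : 'I_K =>
     (if j != k as b return (j != k) = b -> 'I_(n j)
      then fun h => c (exist _ j h)
      else fun h => cast_ord (congr1 n (esym (eqP (negbFE h)))) i) (erefl _)].

(* Mode-k unfolding W_(k) : n_k x (N/n_k) matrix whose columns are the
   mode-k fibers of W (listed in the enumeration order of cidx n k). *)
Definition unfold (R : realFieldType) (K : nat) (n : 'I_K -> nat) (k : 'I_K)
    (W : tensor R n) : 'M[R]_(n k, #|cidx n k|) :=
  \matrix_(i < n k, c < #|cidx n k|) W (join i (enum_val c)).

Definition locally_identifiable (R : realFieldType) (K : nat) (n : 'I_K -> nat)
    (Ws : 'I_K -> tensor R n) : Prop :=
  forall Ws' : 'I_K -> tensor R n,
    \sum_(k < K) Ws' k = \sum_(k < K) Ws k ->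
    (forall k : 'I_K, \rank (unfold k (Ws' k)) = \rank (unfold k (Ws k))) ->
    forall k : 'I_K, Ws' k = Ws k.

From HB Require Import structures.
From mathcomp Require Import all_boot all_order all_algebra.
Import Order.TTheory GRing.Theory Num.Theory.
Local Open Scope ring_scope.
Set Implicit Arguments. Unset Strict Implicit. Unset Printing Implicit Defensive.

(* "If": when W^(k) = 0 for k <> k*, any rival decomposition with the same
   unfolding ranks has rank-0, hence zero, components outside k*, so it
   coincides with the given one.

   "Only if": if two components A = W^(k1), B = W^(k2) (k1 <> k2) are nonzero,
   pick a, b with A a <> 0, B b <> 0 and move the rank-one-in-mode-k2 tensor
     D m = s * B(m at mode k2, b elsewhere) * A(m off mode k2, a at mode k2)
   from B to A.  In mode k1 the columns of A + D are those of A plus multiples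
   of other columns of A, and in mode k2 the columns of B - D are those of B
   plus multiples of one fixed column of B; for a small scalar s both are
   invertible column operations ("column shears"), so all unfolding ranks are
   preserved while D <> 0.  The file develops: column shears of matrices and
   their ranks, index splicing for tensors, the lift of shears to unfoldings,
   the perturbation D, and finally the theorem. *)

(* Column shears: add to each column c a multiple g c of the column phi c.
   With phi idempotent and every 1 + g (phi c) invertible, the shear is
   undone by another shear, so it preserves the rank. *)
Section ColumnShear.
Variables (R : fieldType) (m p : nat).

Definition col_shear (A : 'M[R]_(m, p)) (g : 'I_p -> R) (phi : 'I_p -> 'I_p)
    : 'M[R]_(m, p) :=
  \matrix_(i, c) (A i c + g c * A i (phi c)).

Lemma sum_indicator (F : 'I_p -> R) (a : 'I_p) :
  \sum_(c < p) F c * (c == a)%:R = F a.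
Proof.
rewrite (bigD1 a) //= eqxx mulr1 big1 ?addr0 // => c /negbTE ->.
by rewrite mulr0.
Qed.

(* A shear is a right multiplication, hence cannot increase the rank. *)
Lemma col_shear_rank_le (A : 'M[R]_(m, p)) g phi :
  (\rank (col_shear A g phi) <= \rank A)%N.
Proof.
pose M : 'M[R]_p := \matrix_(c', c) ((c' == c)%:R + g c * (c' == phi c)%:R).
suff -> : col_shear A g phi = A *m M by apply: mxrankM_maxl.
apply/matrixP => i c; rewrite !mxE.
under eq_bigr => c' _ do rewrite !mxE mulrDr mulrCA.
by rewrite big_split /= -mulr_sumr !sum_indicator.
Qed.

Lemma col_shearK (A : 'M[R]_(m, p)) g phi :
  (forall c, phi (phi c) = phi c) -> (forall c, 1 + g (phi c) != 0) ->
  col_shear (col_shear A g phi) (fun c => - g c / (1 + g (phi c))) phi = A.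
Proof.
move=> phiK unit_g; apply/matrixP => i c; rewrite !mxE phiK.
have -> : A i (phi c) + g (phi c) * A i (phi c) = (1 + g (phi c)) * A i (phi c).
  by rewrite mulrDl mul1r.
by rewrite mulrA divfK // mulNr addrK.
Qed.

Lemma col_shear_rank (A : 'M[R]_(m, p)) g phi :
  (forall c, phi (phi c) = phi c) -> (forall c, 1 + g (phi c) != 0) ->
  \rank (col_shear A g phi) = \rank A.
Proof.
move=> phiK unit_g; apply/eqP; rewrite eqn_leq col_shear_rank_le /=.
by rewrite -{1}(col_shearK A phiK unit_g) col_shear_rank_le.
Qed.
End ColumnShear.

Section Join.
Variables (K : nat) (n : 'I_K -> nat) (k : 'I_K).

Lemma join_ne (i : 'I_(n k)) (c : cidx n k) (j : 'I_K) (h : j != k) :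
  join i c j = c (exist _ j h).
Proof.
rewrite /join ffunE; move: (erefl (j != k)); generalize (j != k) at 2 3.
case=> e; first by rewrite (eq_irrelevance e h).
by exfalso; move: h; rewrite e.
Qed.

Lemma join_val (i : 'I_(n k)) (c : cidx n k) : val (join i c k) = val i.
Proof.
rewrite /join ffunE; move: (erefl (k != k)); generalize (k != k) at 2 3.
by case=> e //; exfalso; move/negP: e; apply.
Qed.

Lemma join_surj (x : midx n) : x = join (x k) [ffun j => x (val j)].
Proof.
apply/ffunP => j; case: (eqVneq j k) => [->|h]; last by rewrite join_ne ffunE.
by apply/val_inj; rewrite join_val.
Qed.

Definition splice (P : pred 'I_K) (x y : midx n) : midx n :=
  [ffun j => if P j then x j else y j].

Lemma spliceE (P : pred 'I_K) (x y : midx n) (j : 'I_K) :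
  splice P x y j = if P j then x j else y j.
Proof. by rewrite ffunE. Qed.

Definition csplice (P : pred 'I_K) (c : cidx n k) (y : midx n) : cidx n k :=
  [ffun j => if P (val j) then c j else y (val j)].

Lemma join_csplice (P : pred 'I_K) (i : 'I_(n k)) (c : cidx n k) (y : midx n) :
  P k -> join i (csplice P c y) = splice P (join i c) y.
Proof.
move=> Pk; apply/ffunP => j; rewrite spliceE.
case: (eqVneq j k) => [->|h]; first by rewrite Pk; apply/val_inj; rewrite !join_val.
by rewrite !join_ne ffunE.
Qed.

Lemma splice_join_indep (P : pred 'I_K) (i i' : 'I_(n k)) (c : cidx n k)
    (y : midx n) :
  ~~ P k -> splice P (join i c) y = splice P (join i' c) y.
Proof.
move=> Pk; apply/ffunP => j; rewrite !spliceE.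
by case: (eqVneq j k) => [->|h]; [rewrite (negbTE Pk) | rewrite !join_ne].
Qed.
End Join.

Section Unfolding.
Variables (R : realFieldType) (K : nat) (n : 'I_K -> nat) (k : 'I_K).

(* Every entry of a tensor appears in its mode-k unfolding, so an unfolding
   has rank 0 exactly when the tensor vanishes. *)
Lemma unfold_rank_eq0 (T : tensor R n) : (\rank (unfold k T) == 0%N) = (T == 0).
Proof.
rewrite mxrank_eq0; apply/eqP/eqP => [/matrixP unfT0 | ->].
  apply/ffunP => x; rewrite (join_surj k x) [RHS]ffunE.
  by have := unfT0 (x k) (enum_rank ([ffun j => x (val j)] : cidx n k));
    rewrite !mxE enum_rankK.
by apply/matrixP => i c; rewrite !mxE ffunE.
Qed.

(* A tensor-level column shear: T' adds to each entry a multiple, depending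
   only on the column, of the entry obtained by resetting the modes outside P
   (a set of modes containing k) to those of y.  Its mode-k unfolding is a
   column shear of that of T, so the rank is preserved. *)
Lemma unfold_shear_rank (P : pred 'I_K) (y : midx n) (g : midx n -> R)
    (T T' : tensor R n) :
  P k ->
  (forall (i i' : 'I_(n k)) (c : cidx n k), g (join i c) = g (join i' c)) ->
  (forall x, 1 + g (splice P x y) != 0) ->
  (forall x, T' x = T x + g x * T (splice P x y)) ->
  \rank (unfold k T') = \rank (unfold k T).
Proof.
move=> Pk g_col unit_g shearT.
have [nk0 | nk_gt0] := posnP (n k).
  have rank0 (M : 'M[R]_(n k, #|cidx n k|)) : \rank M = 0%N.
    by apply/eqP; rewrite -leqn0 (leq_trans (rank_leq_row M)) ?nk0.
  by rewrite !rank0.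
pose i0 := Ordinal nk_gt0.
pose phi (c : 'I_#|cidx n k|) := enum_rank (csplice P (enum_val c) y).
have phiK c : phi (phi c) = phi c.
  rewrite /phi enum_rankK; congr enum_rank; apply/ffunP => j.
  by rewrite /csplice !ffunE; case: (P (val j)).
have -> : unfold k T' = col_shear (unfold k T) (fun c => g (join i0 (enum_val c))) phi.
  apply/matrixP => i c; rewrite !mxE shearT /phi enum_rankK join_csplice //.
  by rewrite (g_col i i0).
by apply: col_shear_rank => // c; rewrite /phi enum_rankK join_csplice.
Qed.
End Unfolding.

(* The perturbation is scaled so that the shears it induces are invertible:
   the relevant scalars 1 + t all have |t| < 1. *)
Lemma ratio_lt1 (R : numFieldType) (x y : R) :
  0 <= y -> `|x / (1 + `|x| + y)| < 1.
Proof.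
move=> y_ge0; have den_gt0 : 0 < 1 + `|x| + y by rewrite -addrA ltr_pwDl // addr_ge0.
rewrite normrM normfV (gtr0_norm den_gt0) ltr_pdivrMr // mul1r.
by rewrite -addrA addrCA ltr_pwDr // ltr_pwDl.
Qed.

Lemma addr1_neq0 (R : numDomainType) (t : R) : `|t| < 1 -> 1 + t != 0.
Proof.
apply: contraTneq; rewrite addrC => /eqP; rewrite addr_eq0 => /eqP ->.
by rewrite normrN normr1 ltxx.
Qed.

Section Perturbation.
Variables (R : realFieldType) (K : nat) (n : 'I_K -> nat) (k2 : 'I_K).
Variables (A B : tensor R n) (a b : midx n).

(* The multi-index where the two column operations meet. *)
Definition corner : midx n := splice (pred1 k2) a b.

Definition perturbation_scale : R := (1 + `|A corner| + `|B corner|)^-1.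

Definition perturbation : tensor R n :=
  [ffun x => perturbation_scale * B (splice (pred1 k2) x b)
                                * A (splice (predC1 k2) x a)].

Lemma perturbation_rank_left (k1 : 'I_K) :
  k1 != k2 -> \rank (unfold k1 (A + perturbation)) = \rank (unfold k1 A).
Proof.
move=> k12; apply: (@unfold_shear_rank _ _ _ _ (predC1 k2) a
  (fun x => perturbation_scale * B (splice (pred1 k2) x b))) => //.
- by move=> i i' c; rewrite (splice_join_indep i i') //= eq_sym.
- move=> x; have -> : splice (pred1 k2) (splice (predC1 k2) x a) b = corner.
    by apply/ffunP => j; rewrite !spliceE /=; case: eqP => // ->.
  apply: addr1_neq0; rewrite /perturbation_scale mulrC addrAC.
  exact: ratio_lt1.
- by move=> x; rewrite !ffunE.
Qed.

Lemma perturbation_rank_right :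
  \rank (unfold k2 (B - perturbation)) = \rank (unfold k2 B).
Proof.
apply: (@unfold_shear_rank _ _ _ _ (pred1 k2) b
  (fun x => - perturbation_scale * A (splice (predC1 k2) x a))) => //=.
- by move=> i i' c; rewrite (splice_join_indep i i') //= eqxx.
- move=> x; have -> : splice (predC1 k2) (splice (pred1 k2) x b) a = corner.
    by apply/ffunP => j; rewrite !spliceE /=; case: eqP => // ->.
  by apply: addr1_neq0; rewrite mulNr normrN mulrC ratio_lt1.
- by move=> x; rewrite !ffunE !mulNr [_ * B _ * A _]mulrAC.
Qed.

Lemma perturbation_neq0 : A a != 0 -> B b != 0 -> perturbation != 0.
Proof.
move=> Aa Bb; apply/eqP => /ffunP /(_ (splice (pred1 k2) b a)).
rewrite !ffunE => /eqP.
have -> : splice (pred1 k2) (splice (pred1 k2) b a) b = b.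
  by apply/ffunP => j; rewrite !spliceE /=; case: eqP.
have -> : splice (predC1 k2) (splice (pred1 k2) b a) a = a.
  by apply/ffunP => j; rewrite !spliceE /=; case: eqP.
have scale_gt0 : 0 < perturbation_scale.
  by rewrite invr_gt0 -addrA ltr_pwDl // addr_ge0.
by rewrite !mulf_eq0 gt_eqF // (negbTE Aa) (negbTE Bb).
Qed.
End Perturbation.

Lemma single_support (V : zmodType) (K : nat) (F : 'I_K -> V) :
  (0 < K)%N -> (forall k1 k2, F k1 != 0 -> F k2 != 0 -> k1 = k2) ->
  exists ks, F ks = \sum_(k < K) F k /\ forall k, k != ks -> F k = 0.
Proof.
move=> K_gt0 F_uniq.
have zero_off ks : F ks != 0 -> forall k, k != ks -> F k = 0.
  move=> Fks k k_ks; apply/eqP; apply: contraNT k_ks => Fk.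
  by rewrite (F_uniq _ _ Fk Fks).
have [ks Fks | F0] := pickP (fun k => F k != 0).
  exists ks; split; last exact: zero_off.
  by rewrite (bigD1 ks) //= big1 ?addr0 //; apply: zero_off.
exists (Ordinal K_gt0); have F0' k : F k = 0 by apply/eqP/negbFE/F0.
by rewrite big1 // F0'.
Qed.

Lemma sum_transfer (V : zmodType) (K : nat) (F : 'I_K -> V) (k1 k2 : 'I_K)
    (D : V) :
  \sum_(k < K) (F k + (D *+ (k == k1) - D *+ (k == k2))) = \sum_(k < K) F k.
Proof.
have indicator_sum (k0 : 'I_K) : \sum_(k < K) D *+ (k == k0) = D.
  by rewrite (bigD1 k0) //= eqxx big1 ?addr0 // => k /negbTE ->.
by rewrite big_split /= sumrB !indicator_sum subrr addr0.
Qed.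

Section Identifiability.
Variables (R : realFieldType) (K : nat) (n : 'I_K -> nat).

Lemma ffun_neq0 (T : finType) (V : zmodType) (f : {ffun T -> V}) :
  f != 0 -> exists x, f x != 0.
Proof.
move=> f_neq0; apply/existsP; apply: contraR f_neq0 => /existsPn f0.
by apply/eqP/ffunP => x; rewrite ffunE; apply/eqP/negbNE/f0.
Qed.

(* In a locally identifiable decomposition at most one component is nonzero:
   otherwise transferring the perturbation between two nonzero components
   gives a different decomposition with the same unfolding ranks. *)
Lemma identifiable_nonzero_unique (Ws : 'I_K -> tensor R n) (k1 k2 : 'I_K) :
  locally_identifiable Ws -> Ws k1 != 0 -> Ws k2 != 0 -> k1 = k2.
Proof.
move=> ident A_neq0 B_neq0; apply/eqP/negP => /negP k12.
have [a Aa] := ffun_neq0 A_neq0; have [b Bb] := ffun_neq0 B_neq0.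
pose D := perturbation k2 (Ws k1) (Ws k2) a b.
pose Ws' k := Ws k + (D *+ (k == k1) - D *+ (k == k2)).
have same_ranks k : \rank (unfold k (Ws' k)) = \rank (unfold k (Ws k)).
  rewrite /Ws'; have [->|k_k1] := eqVneq k k1.
    by rewrite (negbTE k12) subr0 perturbation_rank_left.
  have [->|k_k2] := eqVneq k k2.
    by rewrite sub0r perturbation_rank_right.
  by rewrite subrr addr0.
have := ident Ws' (sum_transfer _ _ _ _) same_ranks k1.
rewrite /Ws' eqxx (negbTE k12) subr0 => /eqP.
by rewrite -subr_eq0 addrC addKr (negbTE (perturbation_neq0 k2 Aa Bb)).
Qed.

(* A decomposition concentrated in one component is locally identifiable:
   a rival with the same ranks has rank-0, hence zero, other components. *)
Lemma concentrated_identifiable (Ws : 'I_K -> tensor R n) (ks : 'I_K) :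
  (forall k, k != ks -> Ws k = 0) -> locally_identifiable Ws.
Proof.
move=> Ws0 Ws' same_sum same_ranks.
have Ws'0 k : k != ks -> Ws' k = 0.
  move=> k_ks; apply/eqP; rewrite -(unfold_rank_eq0 k) same_ranks Ws0 //.
  by rewrite unfold_rank_eq0.
have sum_ks (F : 'I_K -> tensor R n) :
    (forall k, k != ks -> F k = 0) -> \sum_(k < K) F k = F ks.
  by move=> F0; rewrite (bigD1 ks) //= big1 ?addr0.
move=> k; have [->|k_ks] := eqVneq k ks; last by rewrite Ws'0 ?Ws0.
by rewrite -(sum_ks _ Ws'0) -(sum_ks _ Ws0).
Qed.
End Identifiability.

Theorem theorem4 (R : realFieldType) (K : nat) (n : 'I_K -> nat)
    (W : tensor R n) (Ws : 'I_K -> tensor R n) :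
  (0 < K)%N ->
  \sum_(k < K) Ws k = W ->
  locally_identifiable Ws <->
  (exists ks : 'I_K, Ws ks = W /\ forall k : 'I_K, k != ks -> Ws k = 0).
Proof.
move=> K_gt0 sumW; split => [ident | [ks [_ Ws0]]].
  rewrite -sumW; apply: single_support K_gt0 _.
  by move=> k1 k2; apply: identifiable_nonzero_unique.
exact: concentrated_identifiable Ws0.
Qed.
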